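(* Let $K$ be any field, let $u(x,y)\in K[x,y]\setminus K$ be biased, and let $\rho=(\alpha x+p(y),\beta y+\gamma)$ be a nonaffine triangular automorphism of $K[x,y]$, where $\alpha,\beta\in K\setminus\{0\}$, $\gamma\in K$ and $p(y)\in K[y]$ has degree at least $2$. Then $\deg(\rho u)>\deg u$.
   Context: An automorphism $\rho=(f,g)$ of $K[x,y]$ means $\rho x=f$, $\rho y=g$, and $\rho u=u(f,g)$; so $\rho u=u(\alpha x+p(y),\beta y+\gamma)$. $\deg$ denotes total degree. For $0\ne u\in K[x,y]$, $|u|$ denotes the homogeneous component of $u$ of maximal total degree, and $u$ is called biased if $\deg_x|u|\ge\deg_y|u|$, where $\deg_x,\deg_y$ are the degrees in $x$ and in $y$. *)

From HB Require Import structures.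
From mathcomp Require Import all_boot all_order all_algebra.
From mathcomp Require Import mpoly.
Set Implicit Arguments. Unset Strict Implicit. Unset Printing Implicit Defensive.
Import Order.TTheory GRing.Theory.
Local Open Scope ring_scope.

(* K[x,y] is {mpoly K[2]}; x = 'X_0, y = 'X_1. *)
Definition ix : 'I_2 := ord0.
Definition iy : 'I_2 := ord_max.

(* total degree (for nonzero u): deg u = msize u - 1 *)
Definition tdeg (K : fieldType) (u : {mpoly K[2]}) : nat := (msize u).-1.

Definition tophom (K : fieldType) (u : {mpoly K[2]}) : {mpoly K[2]} :=
  pihomog mdeg (msize u).-1 u.

Definition degx (K : fieldType) (u : {mpoly K[2]}) : nat :=
  (\max_(m <- msupp u) m ix)%N.
Definition degy (K : fieldType) (u : {mpoly K[2]}) : nat :=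
  (\max_(m <- msupp u) m iy)%N.

Definition biased (K : fieldType) (u : {mpoly K[2]}) : Prop :=
  (degy (tophom u) <= degx (tophom u))%N.

Definition polyY (K : fieldType) (p : {poly K}) : {mpoly K[2]} :=
  (map_poly (@mpolyC 2 K) p).['X_iy].

Definition triang (K : fieldType) (alpha beta gamma : K) (p : {poly K})
  (u : {mpoly K[2]}) : {mpoly K[2]} :=
  u \mPo [tuple alpha *: 'X_ix + polyY p; beta *: 'X_iy + gamma%:MP].

From HB Require Import structures.
From mathcomp Require Import all_boot all_order all_algebra.
From mathcomp Require Import mpoly.
From mathcomp Require Import zify.
Import GRing.Theory.
Local Open Scope ring_scope.

(* Give x the weight n = deg p and y the weight 1, realised by the substitution
   x |-> t X^n, y |-> X into K[t][X], under which x^i y^j becomes t^i X^(n i + j).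
   Let W be the largest weight of a monomial of u.  The weighted leading form of
   rho x is (alpha t + lc p) X^n, so the coefficient of X^W in the image of rho u
   is g(alpha t + lc p), where g collects the weight-W monomials of u by x-degree.
   Since lc p <> 0, this polynomial has a nonzero coefficient of t-degree k at most
   the spread of those x-degrees, and biasedness makes that spread smaller than a,
   for a monomial x^a y^b of u of top degree with b <= a and a > 0.  Hence rho u
   contains x^k y^(W - n k), of total degree W - (n - 1) k > n a + b - (n - 1) a,
   which is deg u. *)

Lemma bigmax_seq_attained {T : eqType} (F : T -> nat) {s : seq T} :
  s != [::] -> exists2 x, x \in s & (\max_(y <- s) F y)%N = F x.
Proof.
elim: s => // x s IH _; rewrite big_cons.
have [->|/IH[y y_s ->]] := eqVneq s [::].
  by exists x; rewrite ?mem_head // big_nil maxn0.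
have [le_xy|lt_yx] := leqP (F x) (F y).
  by exists y; rewrite ?inE ?y_s ?orbT //; apply/maxn_idPr.
by exists x; rewrite ?mem_head //; apply/maxn_idPl/ltnW.
Qed.

Section LowCoefficients.
Variable R : idomainType.
Implicit Types (g p q A B L : {poly R}) (i j k r W : nat).

Lemma coef_sum_scaleXn (T : Type) (s : seq T) (a : T -> R) (e : T -> nat) i :
  (\sum_(t <- s) a t *: 'X^(e t))`_i = \sum_(t <- s | e t == i) a t.
Proof.
rewrite coef_sum [RHS]big_mkcond /=; apply: eq_bigr => t _.
by rewrite coefZ coefXn eq_sym; case: eqP; rewrite ?mulr1 ?mulr0.
Qed.

Lemma coef_top_expM A B i j W :
  A != 0 -> B != 0 -> ((size A).-1 * i + (size B).-1 * j <= W)%N ->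
  (A ^+ i * B ^+ j)`_W =
    if ((size A).-1 * i + (size B).-1 * j == W)%N
    then lead_coef A ^+ i * lead_coef B ^+ j else 0.
Proof.
move=> A0 B0 le_W; set q := A ^+ i * B ^+ j.
have q0 : q != 0 by rewrite mulf_neq0 ?expf_neq0.
have size_q : (size q).-1 = ((size A).-1 * i + (size B).-1 * j)%N.
  have := size_poly_gt0 (A ^+ i); have := size_poly_gt0 (B ^+ j).
  rewrite size_mul ?expf_neq0 // -!size_exp; lia.
case: eqP => [<-|ne]; first by rewrite -size_q -lead_coefE lead_coefM !lead_coef_exp.
have : (size q <= W)%N by rewrite (polySpred q0) size_q; lia.
by move/leq_sizeP/(_ W (leqnn W)).
Qed.

Lemma low_coefM_neq0 p q :
  p != 0 -> q`_0 != 0 -> exists2 k, (k < size p)%N & (p * q)`_k != 0.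
Proof.
move=> p0 q0; have p_lead : p`_(size p).-1 != 0 by rewrite -lead_coefE lead_coef_eq0.
have [k p_k k_min] := ex_minnP (ex_intro (fun k => p`_k != 0) _ p_lead).
exists k.
  by rewrite ltnNge; apply: contra p_k => /leq_sizeP ->.
rewrite coefM big_ord_recr /= subnn big1 ?add0r ?mulf_neq0 // => j _.
suff -> : p`_j = 0 by rewrite mul0r.
by apply/eqP; apply: contraTT (ltn_ord j) => /k_min; rewrite -leqNgt.
Qed.

Lemma low_coef_comp_poly2 L g i0 r :
  size L = 2 -> L`_0 != 0 -> g != 0 ->
  (forall i, (i < i0)%N -> g`_i = 0) -> (size g <= i0 + r)%N ->
  exists2 k, (k < r)%N & (g \Po L)`_k != 0.
Proof.
move=> L2 L_0 g0 g_low g_size; set h := drop_poly i0 g.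
have g_h : g = h * 'X^i0.
  rewrite -{1}(poly_take_drop i0 g) -[RHS]add0r; congr (_ + _).
  by apply/polyP => i; rewrite coef_take_poly coef0; case: ifP => // /g_low.
have h0 : h != 0 by apply: contraNneq g0 => h0; rewrite g_h h0 mul0r.
have [k k_lt k_nz] : exists2 k, (k < size (h \Po L))%N & ((h \Po L) * L ^+ i0)`_k != 0.
  apply: (low_coefM_neq0 (h \Po L) (L ^+ i0)); first by rewrite comp_poly2_eq0.
  by rewrite -horner_coef0 horner_exp horner_coef0 expf_neq0.
exists k; last by rewrite g_h comp_polyM rmorphXn /= comp_polyX.
by move: k_lt; rewrite size_comp_poly2 // size_drop_poly; lia.
Qed.

Lemma low_coef_comp_sum_scaleXn (T : eqType) (s : seq T) (a : T -> R) (e : T -> nat)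
    L r :
  size L = 2 -> L`_0 != 0 -> uniq s -> s != [::] ->
  {in s, forall t, a t != 0} -> {in s &, injective e} ->
  {in s &, forall t t', e t < e t' + r}%N ->
  exists2 k, (k < r)%N & ((\sum_(t <- s) a t *: 'X^(e t)) \Po L)`_k != 0.
Proof.
move=> L2 L_0 s_uniq s_nil a0 e_inj e_spread; set g := \sum_(t <- s) _.
have [t1 t1_s] : exists t, t \in s.
  by case: s s_nil {s_uniq a0 e_inj e_spread g} => // t s _; exists t; rewrite mem_head.
have has_e : exists i, has (fun t => e t == i) s.
  by exists (e t1); apply/hasP; exists t1.
have [_ /hasP[t0 t0_s /eqP <-] t0_min] := ex_minnP has_e.
have t0_low t : t \in s -> (e t0 <= e t)%N.
  by move=> t_s; apply: t0_min; apply/hasP; exists t.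
apply: (low_coef_comp_poly2 _ _ (e t0)) => //.
- have g_t0 : g`_(e t0) = a t0.
    rewrite coef_sum_scaleXn (big_rem t0) //= eqxx big1_seq ?addr0 //.
    move=> t /andP[/eqP et].
    rewrite mem_rem_uniq // inE => /andP[ne t_s].
    by rewrite (e_inj _ _ t_s t0_s et) eqxx in ne.
  by apply/eqP => g0; move: (a0 t0 t0_s); rewrite -g_t0 g0 coef0 eqxx.
- move=> i lt_i; rewrite coef_sum_scaleXn big1_seq // => t /andP[/eqP et t_s].
  by move: (t0_low t t_s); rewrite et leqNgt lt_i.
- apply/leq_sizeP => i le_i.
  rewrite coef_sum_scaleXn big1_seq // => t /andP[/eqP et t_s].
  by move: (e_spread t t0 t_s t0_s); rewrite et ltnNge le_i.
Qed.

End LowCoefficients.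

Lemma size_CXnD (R : nzRingType) (q : {poly R}) c n :
  size q = n.+1 -> c + lead_coef q != 0 -> size (c%:P * 'X^n + q) = n.+1.
Proof.
move=> size_q cq0.
have coefE i : (c%:P * 'X^n + q)`_i = c * (i == n)%:R + q`_i.
  by rewrite coefD coefCM coefXn.
apply/anti_leq/andP; split.
  apply/leq_sizeP => j lt_nj; rewrite coefE gtn_eqF // mulr0 add0r.
  by move/leq_sizeP: (eq_leq size_q); apply.
rewrite ltnNge; apply: contra cq0 => /leq_sizeP/(_ n (leqnn n)).
by rewrite coefE eqxx mulr1 lead_coefE size_q => ->.
Qed.

Lemma lead_coef_CXnD (R : nzRingType) (q : {poly R}) c n :
  size q = n.+1 -> c + lead_coef q != 0 -> lead_coef (c%:P * 'X^n + q) = c + lead_coef q.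
Proof.
move=> size_q cq0; rewrite lead_coefE size_CXnD //.
by rewrite coefD coefCM coefXn eqxx mulr1 lead_coefE size_q.
Qed.

Lemma mdeg2 (m : 'X_{1..2}) : mdeg m = (m ix + m iy)%N.
Proof.
by rewrite mdegE !big_ord_recl big_ord0 addn0; congr (_ + m _)%N; apply/val_inj.
Qed.

Lemma mnm2_eq (m m' : 'X_{1..2}) : m ix = m' ix -> m iy = m' iy -> m = m'.
Proof.
move=> eq_x eq_y; apply/mnmP => -[[|[|i]] lt_i2] //.
- by rewrite -[X in m X](@val_inj _ _ _ ix) // -[X in m' X](@val_inj _ _ _ ix).
- by rewrite -[X in m X](@val_inj _ _ _ iy) // -[X in m' X](@val_inj _ _ _ iy).
Qed.

Section TopMonomial.
Context {K : fieldType}.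
Implicit Types (u : {mpoly K[2]}) (m : 'X_{1..2}).

Lemma mcoeff_tophom u m : (tophom u)@_m = if mdeg m == tdeg u then u@_m else 0.
Proof.
rewrite /tophom pihomogE raddf_sum /= -big_filter.
under eq_bigr do rewrite mcoeffZ mcoeffX.
have [m_u|m_u] := boolP (m \in msupp u).
  case: ifP => deg_m.
    rewrite (big_rem m) ?mem_filter ?deg_m //= eqxx mulr1 big1_seq ?addr0 // => m' /=.
    rewrite mem_rem_uniq ?filter_uniq ?msupp_uniq // inE => /andP[ne _].
    by rewrite (negbTE ne) mulr0.
  rewrite big1_seq // => m' /=; rewrite mem_filter => /andP[deg_m' _].
  by case: (eqVneq m' m) => [eq_m|_]; [rewrite -eq_m deg_m' in deg_m | rewrite mulr0].
rewrite big1_seq => [|m']; first by case: ifP; rewrite // (memN_msupp_eq0 m_u).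
rewrite /= mem_filter => /andP[_ m'_u].
by case: (eqVneq m' m) => [eq_m|_]; [rewrite -eq_m m'_u in m_u | rewrite mulr0].
Qed.

Lemma mdeg_le_tdeg {u m} : m \in msupp u -> (mdeg m <= tdeg u)%N.
Proof. by move/msize_mdeg_lt; rewrite /tdeg; case: (msize u). Qed.

Lemma biased_top_monomial {u} : (forall c : K, u != c%:MP) -> biased u ->
  exists2 ms, ms \in msupp u & [/\ mdeg ms = tdeg u, ms iy <= ms ix & 0 < ms ix]%N.
Proof.
move=> u_nonconst u_biased.
have size_u : (1 < msize u)%N.
  rewrite ltnNge; apply/negP => /msize1_polyC u_C.
  by move: (u_nonconst u@_0); rewrite -u_C eqxx.
have u0 : u != 0 by apply: contraTneq size_u => ->; rewrite msize0.
have top_nil : msupp (tophom u) != [::].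
  have : mlead u \in msupp (tophom u).
    rewrite mcoeff_msupp mcoeff_tophom /tdeg -mlead_deg // eqxx -mcoeff_msupp.
    exact: mlead_supp.
  by apply: contraTneq => ->.
have [ms ms_top ms_x] := bigmax_seq_attained (fun m : 'X_{1..2} => m ix) top_nil.
move: (ms_top); rewrite mcoeff_msupp mcoeff_tophom.
case: (mdeg ms =P tdeg u) => [ms_deg ms_u|_]; last by rewrite eqxx.
have ms_yx : (ms iy <= ms ix)%N.
  apply: leq_trans (leq_bigmax_seq (F := fun m : 'X_{1..2} => m iy) _ ms_top isT) _.
  by rewrite -ms_x.
exists ms; first by rewrite mcoeff_msupp.
split=> //; rewrite lt0n; apply: contraTneq size_u => ms_x0.
move: ms_deg ms_yx; rewrite mdeg2 ms_x0 leqn0 /tdeg => /[swap] /eqP ->.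
by case: (msize u) => [|[]].
Qed.

End TopMonomial.

Definition wdeg (n : nat) (m : 'X_{1..2}) : nat := (n * m ix + m iy)%N.

Definition wslice {K : fieldType} (n W : nat) (f : {mpoly K[2]}) : seq 'X_{1..2} :=
  [seq m <- msupp f | wdeg n m == W].

Lemma wdeg_spread {n} {ms m m' : 'X_{1..2}} :
  (1 < n)%N -> (ms iy <= ms ix)%N -> (0 < ms ix)%N -> (mdeg m' <= mdeg ms)%N ->
  (wdeg n ms <= wdeg n m')%N -> wdeg n m = wdeg n m' -> (m ix < m' ix + ms ix)%N.
Proof. rewrite /wdeg !mdeg2; nia. Qed.

Section WeightedSubstitution.
Context {K : fieldType}.
Implicit Types (f u : {mpoly K[2]}) (m : 'X_{1..2}) (n W : nat).

(* x |-> t X^n and y |-> X, where t = 'X%:P is the variable of the coefficient ring. *)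
Definition wvar n (i : 'I_2) : {poly {poly K}} := if i == ix then 'X%:P * 'X^n else 'X.

Local Notation wsubst n := (mmap ((@polyC {poly K}) \o (@polyC K)) (wvar n)).

Lemma mmap1_wvar n m : mmap1 (wvar n) m = ('X^(m ix))%:P * 'X^(wdeg n m).
Proof.
rewrite /mmap1 !big_ord_recl big_ord0 mulr1 /wvar /=.
have -> : lift ord0 ord0 = iy by apply/val_inj.
by rewrite exprMn rmorphXn /= -exprM exprD mulrA mulnC.
Qed.

Lemma coef_wsubst n f W :
  (wsubst n f)`_W = \sum_(m <- wslice n W f) f@_m *: 'X^(m ix).
Proof.
rewrite coef_sum big_filter [RHS]big_mkcond; apply: eq_bigr => m _.
rewrite mmap1_wvar /= mulrA -rmorphM coefCM coefXn mul_polyC eq_sym.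
by case: eqP; rewrite ?mulr1 ?mulr0.
Qed.

Lemma wsubst_coef_neq0 {n f W k} : ((wsubst n f)`_W)`_k != 0 ->
  exists2 m, m \in msupp f & m ix = k /\ wdeg n m = W.
Proof.
rewrite coef_wsubst coef_sum_scaleXn => nz.
have /hasP[m] : has (fun m => m ix == k) (wslice n W f).
  apply: contraNT nz => /hasPn none; rewrite big1_seq // => m /andP[m_k /none].
  by rewrite m_k.
by rewrite mem_filter => /andP[/eqP m_W m_f] /eqP m_k; exists m.
Qed.

Lemma wsubst_comp n u (lq : 2.-tuple {mpoly K[2]}) :
  wsubst n (u \mPo lq) = \sum_(m <- msupp u)
    (u@_m)%:P%:P * wsubst n (tnth lq ix) ^+ m ix * wsubst n (tnth lq iy) ^+ m iy.
Proof.
rewrite comp_mpolyEX rmorph_sum; apply: eq_bigr => m _.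
rewrite -mul_mpolyC rmorphM /= [wsubst n _]mmapC comp_mpolyX rmorph_prod /=.
rewrite !big_ord_recl big_ord0 mulr1 !rmorphXn mulrA.
by have -> : lift ord0 ord0 = iy by apply/val_inj.
Qed.

Lemma wsubst_x n a (p : {poly K}) :
  wsubst n (a *: 'X_ix + polyY p) = (a%:P * 'X)%:P * 'X^n + p^:P.
Proof.
rewrite rmorphD /= [wsubst n _]mmapZ [wsubst n _]mmapX mmap1U /wvar eqxx /=.
rewrite mulrA -rmorphM; congr (_ + _).
rewrite /polyY -horner_map /= [wsubst n _]mmapX mmap1U /wvar /= -map_poly_comp.
rewrite (eq_map_poly (g := (@polyC {poly K}) \o (@polyC K))); last first.
  by move=> c /=; rewrite [wsubst n _]mmapC.
by rewrite map_poly_comp; apply: comp_polyXr.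
Qed.

Lemma wsubst_y n b c : wsubst n (b *: 'X_iy + c%:MP) = b%:P%:P * 'X + c%:P%:P.
Proof.
by rewrite rmorphD /= [wsubst n _]mmapZ [wsubst n _]mmapX mmap1U [wsubst n _]mmapC.
Qed.

Lemma coef_wsubst_triang u alpha beta gamma (p : {poly K}) W :
  alpha != 0 -> beta != 0 -> (1 < size p)%N ->
  (forall m, m \in msupp u -> (wdeg (size p).-1 m <= W)%N) ->
  (wsubst (size p).-1 (triang alpha beta gamma p u))`_W =
  (\sum_(m <- wslice (size p).-1 W u) (u@_m * beta ^+ m iy) *: 'X^(m ix))
    \Po (alpha%:P * 'X + (lead_coef p)%:P).
Proof.
move=> a0 b0 p_size W_max; set n := (size p).-1; set L := alpha%:P * 'X + _.
set P := (alpha%:P * 'X)%:P * 'X^n + p^:P; set Q := beta%:P%:P * 'X + gamma%:P%:P.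
have size_pP : size p^:P = n.+1 by rewrite size_map_polyC prednK // ltnW.
have L0 : alpha%:P * 'X + lead_coef p^:P != 0.
  by rewrite lead_coef_map /= -size_poly_eq0 size_MXaddC polyC_eq0 (negbTE a0).
have size_P : size P = n.+1 by apply: size_CXnD.
have lead_P : lead_coef P = L by rewrite lead_coef_CXnD // lead_coef_map.
have size_Q : size Q = 2.
  by rewrite size_MXaddC !polyC_eq0 (negbTE b0) /= size_polyC polyC_eq0 b0.
have lead_Q : lead_coef Q = beta%:P.
  rewrite lead_coefDl ?lead_coefMX ?lead_coefC // size_mulX ?polyC_eq0 //.
  by rewrite !size_polyC !polyC_eq0 b0; case: (gamma != 0).
have P0 : P != 0 by rewrite -size_poly_eq0 size_P.
have Q0 : Q != 0 by rewrite -size_poly_eq0 size_Q.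
rewrite /triang wsubst_comp /= wsubst_x wsubst_y -/P -/Q coef_sum linear_sum big_filter.
rewrite [RHS]big_mkcond big_seq [RHS]big_seq; apply: eq_bigr => m m_u /=.
have := W_max m m_u; rewrite /wdeg => le_W.
rewrite -mulrA coefCM coef_top_expM ?size_P ?size_Q ?mul1n //.
case: eqP => _; last by rewrite mulr0.
rewrite lead_P lead_Q comp_polyZ [X in _ *: X]rmorphXn /= comp_polyX.
by rewrite -mul_polyC rmorphM rmorphXn /= mulrCA mulrC.
Qed.

Lemma wsubst_triang_low_coef u alpha beta gamma (p : {poly K}) W r :
  alpha != 0 -> beta != 0 -> (1 < size p)%N ->
  (forall m, m \in msupp u -> (wdeg (size p).-1 m <= W)%N) ->
  wslice (size p).-1 W u != [::] ->
  {in wslice (size p).-1 W u &, forall m m', m ix < m' ix + r}%N ->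
  exists2 k, (k < r)%N & ((wsubst (size p).-1 (triang alpha beta gamma p u))`_W)`_k != 0.
Proof.
move=> a0 b0 p_size W_max slice_nil spread; rewrite coef_wsubst_triang //.
have p0 : p != 0 by rewrite -size_poly_gt0 ltnW.
apply: low_coef_comp_sum_scaleXn => //.
- by rewrite size_MXaddC polyC_eq0 (negbTE a0) /= size_polyC a0.
- by rewrite coefD coefMX coefC /= add0r coefC lead_coef_eq0.
- by rewrite filter_uniq ?msupp_uniq.
- move=> m; rewrite mem_filter => /andP[_ m_u].
  by rewrite mulf_neq0 ?expf_neq0 // -mcoeff_msupp.
- move=> m m'; rewrite !mem_filter => /andP[/eqP m_W _] /andP[/eqP m'_W _] eq_x.
  by apply: mnm2_eq => //; move: m_W m'_W; rewrite /wdeg eq_x; lia.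
Qed.

End WeightedSubstitution.

Theorem proposition4p1 (K : fieldType) (u : {mpoly K[2]})
  (alpha beta gamma : K) (p : {poly K}) :
  (forall c : K, u != c%:MP) ->
  biased u ->
  alpha != 0 -> beta != 0 ->
  (2 <= (size p).-1)%N ->
  (tdeg u < tdeg (triang alpha beta gamma p u))%N.
Proof.
move=> u_nonconst u_biased alpha0 beta0 deg_p; set n := (size p).-1 in deg_p *.
have [ms ms_u [ms_deg ms_yx ms_x]] := biased_top_monomial u_nonconst u_biased.
have supp_u : msupp u != [::] by apply: contraTneq ms_u => ->.
have [mW mW_u W_def] := bigmax_seq_attained (wdeg n) supp_u.
set W := \max_(m <- msupp u) wdeg n m in W_def.
have W_max m : m \in msupp u -> (wdeg n m <= W)%N by move=> m_u; apply: leq_bigmax_seq.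
have p_size : (1 < size p)%N by move: deg_p; rewrite /n; lia.
have slice_nil : wslice n W u != [::].
  by apply: contraTneq (_ : mW \in wslice n W u) => [->//|]; rewrite mem_filter W_def eqxx.
have spread : {in wslice n W u &, forall m m' : 'X_{1..2}, m ix < m' ix + ms ix}%N.
  move=> m m'; rewrite !mem_filter => /andP[/eqP m_W _] /andP[/eqP m'_W m'_u].
  apply: (wdeg_spread deg_p ms_yx ms_x); first by rewrite ms_deg mdeg_le_tdeg.
    by rewrite m'_W W_max.
  by rewrite m_W m'_W.
have [k k_lt k_nz] := wsubst_triang_low_coef u alpha beta gamma p W (ms ix)
  alpha0 beta0 p_size W_max slice_nil spread.
have [m' m'_rho [m'_x m'_W]] := wsubst_coef_neq0 k_nz.
have := mdeg_le_tdeg m'_rho; have := W_max ms ms_u.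
rewrite -ms_deg !mdeg2 -m'_W /wdeg m'_x; nia.
Qed.
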